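(* For every $-1<\theta<1$ and positive integer $k$, there exists $h>0$ such that for every $d'\ge0$ there is a probability distribution $P_F^{d'}$ over functions $F:\{0,1\}^{L_{d'}}\to\{0,1,?\}$ with the following properties: (1) every function in the support of $P_F^{d'}$ can be computed by a circuit of depth at most $hd'$ with NOT gates and fan-in-two AND/OR gates; (2) for every $x\in\{0,1\}^{L_{d'}}$, if $F\sim P_F^{d'}$ then $\mathbb{P}[F(x)\in\{0,1\}]\ge 1-1/(2k)$; (3) for every $x\in\{0,1\}^{L_{d'}}$, $\mathbb{P}[F(x)=1\mid F(x)\in\{0,1\}]=\mathbb{P}[X^{(0)}=1\mid X^{(d')}=x]$.
   Context: Broadcast (Ising) tree model: complete $k$-ary tree of depth $d'$ with root $\rho$; $L_r$ = vertices at depth $r$; $\sigma_\rho$ uniform on $\{0,1\}$; each child $v$ of $u$ independently has $\sigma_v=\sigma_u$ with probability $(1+\theta)/2$ and $1-\sigma_u$ otherwise; $X^{(r)}=(\sigma_v)_{v\in L_r}$. The three output values $0,1,?$ are encoded in binary. *)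

From HB Require Import structures.
From mathcomp Require Import all_boot all_order all_algebra.
From mathcomp Require Import reals.
Set Implicit Arguments. Unset Strict Implicit. Unset Printing Implicit Defensive.
Import Order.TTheory GRing.Theory Num.Theory.
Local Open Scope ring_scope.

(* Vertices of the complete k-ary tree of depth d: pairs (r, i) with
   r <= d the depth and i < k^r the index of the vertex at depth r.
   The root is (0,0); the children of (r, i) are (r+1, i*k + j), j < k. *)
Definition tvert (k d : nat) :=
  {p : 'I_d.+1 * 'I_(k ^ d) | (p.2 < k ^ p.1)%N}.

Definition tdepth k d (v : tvert k d) : nat := (val v).1.
Definition tindex k d (v : tvert k d) : nat := (val v).2.

Definition is_child k d (u v : tvert k d) : bool :=
  (tdepth v == (tdepth u).+1) && (tindex v %/ k == tindex u)%N.

(* probability of a full labeling sigma of the tree: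
   root uniform, each edge keeps the label w.p. (1+theta)/2 *)
Definition edge_w (R : realType) (theta : R) (a b : bool) : R :=
  if a == b then (1 + theta) / 2 else (1 - theta) / 2.

Definition label_prob (R : realType) (theta : R) (k d : nat)
    (sigma : {ffun tvert k d -> bool}) : R :=
  (1 / 2) * \prod_(u : tvert k d) \prod_(v : tvert k d | is_child u v)
              edge_w theta (sigma u) (sigma v).

Definition leaves_are k d (sigma : {ffun tvert k d -> bool})
    (x : {ffun 'I_(k ^ d) -> bool}) : bool :=
  [forall v : tvert k d, (tdepth v == d) ==> (sigma v == x (val v).2)].

Definition root_is k d (sigma : {ffun tvert k d -> bool}) (b : bool) : bool :=
  [forall v : tvert k d, (tdepth v == 0%N) ==> (sigma v == b)].

Definition prob_leaves (R : realType) (theta : R) k d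
    (x : {ffun 'I_(k ^ d) -> bool}) : R :=
  \sum_(sigma | leaves_are sigma x) label_prob theta sigma.

Definition prob_root1_leaves (R : realType) (theta : R) k d
    (x : {ffun 'I_(k ^ d) -> bool}) : R :=
  \sum_(sigma | root_is sigma true && leaves_are sigma x) label_prob theta sigma.

Definition cond_root1 (R : realType) (theta : R) k d
    (x : {ffun 'I_(k ^ d) -> bool}) : R :=
  prob_root1_leaves theta x / prob_leaves theta x.

Inductive circuit (n : nat) : Type :=
| CInp : 'I_n -> circuit n
| CNot : circuit n -> circuit n
| CAnd : circuit n -> circuit n -> circuit n
| COr  : circuit n -> circuit n -> circuit n.

Fixpoint ceval n (c : circuit n) (x : {ffun 'I_n -> bool}) : bool :=
  match c with
  | CInp i => x i
  | CNot c1 => ~~ ceval c1 x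
  | CAnd c1 c2 => ceval c1 x && ceval c2 x
  | COr c1 c2 => ceval c1 x || ceval c2 x
  end.

Fixpoint cdepth n (c : circuit n) : nat :=
  match c with
  | CInp _ => 0
  | CNot c1 => (cdepth c1).+1
  | CAnd c1 c2 => (maxn (cdepth c1) (cdepth c2)).+1
  | COr c1 c2 => (maxn (cdepth c1) (cdepth c2)).+1
  end.

(* Binary encoding of {0,1,?} by two output bits:
   00 = 0, 11 = 1, 01 and 10 = ?.  (None stands for ?.) *)
Definition decode3 (b1 b2 : bool) : option bool :=
  if b1 == b2 then Some b1 else None.

Definition computable_depth n (F : {ffun {ffun 'I_n -> bool} -> option bool})
    (D : nat) : Prop :=
  exists c1 c2 : circuit n,
    [/\ (cdepth c1 <= D)%N, (cdepth c2 <= D)%N &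
        forall x, F x = decode3 (ceval c1 x) (ceval c2 x)].

Definition is_distr (R : realType) (T : finType) (P : {ffun T -> R}) : Prop :=
  (forall t, 0 <= P t) /\ \sum_(t : T) P t = 1.

(* Summing the labels out of the tree layer by layer gives the belief
   propagation formula P[X^(0) = 1 | X^(d) = x] = L(1) / (L(1) + L(0)), where
   L_v(b) = prod_{children u} sum_c w(b, c) L_u(c) is the likelihood of the
   leaves below v given sigma_v = b.  A random circuit can sample an answer in
   {0, 1, ?} whose probabilities of being 1 and 0 are proportional to L_v(1)
   and L_v(0): negate each child's sample with probability (1 - theta) / 2, and
   answer the common value if all children agree, ? otherwise; this multiplies
   the children's likelihoods.  Running m + 1 independent copies and keeping the
   first defined answer preserves the proportionality and pushes the
   probability of an answer from q >= ((1 - theta^2) / 4 * (1 - 1/(2k)))^k up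
   to 1 - (1 - q)^(m + 1) >= 1 - 1/(2k).  Each level of the tree costs depth
   2k + 5m + 1. *)

From HB Require Import structures.
From mathcomp Require Import all_boot all_order all_algebra.
From mathcomp Require Import reals.
From mathcomp Require Import ring lra zify.
Set Implicit Arguments. Unset Strict Implicit. Unset Printing Implicit Defensive.
Import Order.TTheory GRing.Theory Num.Theory.
Local Open Scope ring_scope.

Lemma sum_option_bool (V : nmodType) (f : option bool -> V) :
  \sum_(a : option bool) f a = f None + f (Some true) + f (Some false).
Proof.
rewrite (bigD1 None) //= (bigD1 (Some true)) //= (bigD1 (Some false)) //=.
by rewrite big1 ?addr0 ?addrA // => -[[]|].
Qed.

Lemma prodr_natb_forall (R : comPzSemiRingType) (T : finType) (P b : pred T) :
  \prod_(v | P v) ((b v)%:R : R) = [forall v, P v ==> b v]%:R.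
Proof.
case: forallP => [Pb|].
  by rewrite big1 // => v Pv; move/implyP: (Pb v) => /(_ Pv) ->.
move/forallP; rewrite negb_forall => /existsP[v].
by rewrite negb_imply => /andP[Pv /negbTE nbv]; rewrite (bigD1 v) //= nbv mul0r.
Qed.

Definition merge_on (T A : finType) (P : pred T) (s t : {ffun T -> A}) : {ffun T -> A} :=
  [ffun v => if P v then t v else s v].

Lemma sum_merge_on (V : nmodType) (T A : finType) (P : pred T) (F : {ffun T -> A} -> V) :
  \sum_s \sum_t F (merge_on P s t) = (\sum_s F s) *+ #|{ffun T -> A}|.
Proof.
pose swap (p : {ffun T -> A} * {ffun T -> A}) := (merge_on P p.1 p.2, merge_on P p.2 p.1).
have swapK : involutive swap.
  by move=> [s t]; congr pair; apply/ffunP => v; rewrite !ffunE; case: (P v).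
rewrite pair_bigA /= (reindex_inj (inv_inj swapK)) /=.
rewrite (eq_bigr (fun p => F p.1)); last first.
  by move=> [s t] _ /=; congr F; apply/ffunP => v; rewrite !ffunE; case: (P v).
rewrite -(pair_bigA _ (fun s _ => F s)) -sumrMnl.
by apply: eq_bigr => s _; rewrite sumr_const cardT.
Qed.

(** * The tree *)

Section TreeShape.
Variables (k d : nat).
Hypothesis k_gt0 : (0 < k)%N.
Local Notation V := (tvert k d).

Lemma tdepth_le (v : V) : (tdepth v <= d)%N.
Proof. by rewrite /tdepth -ltnS ltn_ord. Qed.

Lemma tindex_lt (v : V) : (tindex v < k ^ tdepth v)%N.
Proof. exact: (valP v). Qed.

Lemma is_child_depth (u v : V) : is_child u v -> tdepth v = (tdepth u).+1.
Proof. by case/andP => /eqP. Qed.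

Lemma tvert_ext (u v : V) : tdepth u = tdepth v -> tindex u = tindex v -> u = v.
Proof.
move: u v => [[a i] ?] [[a' i'] ?]; rewrite /tdepth /tindex /= => ea ei.
by apply/val_inj; congr pair; apply/val_inj.
Qed.

Lemma parent_unique (u u' v : V) : is_child u v -> is_child u' v -> u = u'.
Proof.
move=> /andP[/eqP du /eqP iu] /andP[/eqP du' /eqP iu'].
by apply: tvert_ext; [move: du; rewrite du' => -[] | rewrite -iu -iu'].
Qed.

Lemma parent_exists (v : V) : (0 < tdepth v)%N -> exists u : V, is_child u v.
Proof.
move=> dv_gt0.
have lt_depth : ((tdepth v).-1 < d.+1)%N by have := tdepth_le v; lia.
have lt_index : (tindex v %/ k < k ^ d)%N.
  by rewrite ltn_divLR // (leq_trans (ltn_ord (val v).2)) // leq_pmulr.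
have lt_level : (tindex v %/ k < k ^ (Ordinal lt_depth))%N.
  by rewrite ltn_divLR //= -expnSr prednK // tindex_lt.
exists (exist _ (Ordinal lt_depth, Ordinal lt_index) lt_level).
by rewrite /is_child /tdepth /tindex /= prednK // !eqxx.
Qed.

Lemma child_exists (v : V) : (tdepth v < d)%N -> exists u : V, is_child v u.
Proof.
move=> dv_lt.
have lt_depth : ((tdepth v).+1 < d.+1)%N by [].
have lt_level : (tindex v * k < k ^ (Ordinal lt_depth))%N.
  by rewrite /= expnSr ltn_pmul2r // tindex_lt.
have lt_index : (tindex v * k < k ^ d)%N.
  by rewrite (leq_trans lt_level) // leq_pexp2l.
exists (exist _ (Ordinal lt_depth, Ordinal lt_index) lt_level).
by rewrite /is_child /tdepth /tindex /= mulnK // !eqxx.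
Qed.

Lemma card_children_le (v : V) : (#|[pred u | is_child v u]| <= k)%N.
Proof.
pose digit (u : V) : 'I_k := Ordinal (ltn_pmod (tindex u) k_gt0).
rewrite -[k in (_ <= k)%N]card_ord; apply: (@leq_card_in _ _ digit) => u u'.
rewrite !inE => /andP[/eqP du /eqP iu] /andP[/eqP du' /eqP iu'] [] eq_mod.
apply: tvert_ext; first by rewrite du du'.
by rewrite (divn_eq (tindex u) k) (divn_eq (tindex u') k) iu iu' eq_mod.
Qed.

Lemma expk_gt0 : (0 < k ^ d)%N.
Proof. by rewrite expn_gt0 k_gt0. Qed.

Definition troot : V := exist _ (ord0, Ordinal expk_gt0) (isT : (0 < k ^ 0)%N).

Lemma tdepth_eq0 (v : V) : (tdepth v == 0%N) = (v == troot).
Proof.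
apply/eqP/eqP => [dv|-> //]; apply: tvert_ext => //.
by have := tindex_lt v; rewrite dv expn0 /tindex /=; lia.
Qed.

Lemma root_isE (s : {ffun V -> bool}) b : root_is s b = (s troot == b).
Proof.
apply/forallP/eqP => [/(_ troot)/implyP/(_ (eqxx _))/eqP //|<- v].
by apply/implyP; rewrite tdepth_eq0 => /eqP ->.
Qed.

End TreeShape.

(** * Belief propagation *)

Section Posterior.
Variables (R : realType) (theta : R) (k d : nat).
Hypothesis k_gt0 : (0 < k)%N.
Variable x : {ffun 'I_(k ^ d) -> bool}.
Local Notation V := (tvert k d).
Local Notation w := (edge_w theta).
Local Notation troot := (@troot k d k_gt0).

Fixpoint lik (n : nat) (v : V) (b : bool) : R :=
  if n is n'.+1 then \prod_(u | is_child v u) \sum_(c : bool) w b c * lik n' u c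
  else (b == x (val v).2)%:R.

Definition subtree_lik (v : V) : bool -> R := lik (d - tdepth v) v.

Lemma subtree_likE (v : V) b : (tdepth v < d)%N ->
  subtree_lik v b = \prod_(u | is_child v u) \sum_(c : bool) w b c * subtree_lik u c.
Proof.
move=> dv_lt; rewrite /subtree_lik -(subnSK dv_lt) /=.
by apply: eq_bigr => u /is_child_depth ->.
Qed.

Definition edges_upto (r : nat) (s : {ffun V -> bool}) : R :=
  \prod_(u : V) \prod_(v : V | is_child u v && (tdepth v <= r)%N) w (s u) (s v).

(* Labelings with the layers below [r] summed out: each deeper vertex gets
   weight 1/2 per label, so its label averages out of the sum. *)
Definition layer_term (r : nat) (b : bool) (s : {ffun V -> bool}) : R :=
  (s troot == b)%:R * edges_upto r s * \prod_(u : V | tdepth u == r) subtree_lik u (s u) *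
  \prod_(v : V | (r < tdepth v)%N) (1 / 2).

Definition layer_sum (r : nat) (b : bool) : R := \sum_s layer_term r b s.

Lemma layer_sum0 b : layer_sum 0 b = subtree_lik troot b.
Proof.
pose h (v : V) (c : bool) : R :=
  if v == troot then (c == b)%:R * subtree_lik v c else 1 / 2.
have factor s : layer_term 0 b s = \prod_v h v (s v).
  rewrite /layer_term /edges_upto big1 ?mulr1; last first.
    by move=> u _; apply: big1 => v /andP[/is_child_depth ->].
  rewrite (big_pred1 troot) => [|v]; last by rewrite /= tdepth_eq0.
  rewrite [RHS](bigD1 troot) //=; congr (_ * _).
  apply: eq_big => v; first by rewrite lt0n tdepth_eq0.
  by rewrite lt0n tdepth_eq0 /h => /negbTE ->.
rewrite /layer_sum (eq_bigr _ (fun s _ => factor s)) -(bigA_distr_bigA h) /=.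
rewrite (bigD1 troot) //= [X in _ * X]big1 ?mulr1; last first.
  by move=> v /negbTE nv; rewrite big_bool /h nv /=; lra.
by rewrite big_bool /h eqxx; case: b {h factor} => /=; ring.
Qed.

Lemma layer_sum_d b : layer_sum d b =
  \sum_(s | root_is s b && leaves_are s x) \prod_u \prod_(v | is_child u v) w (s u) (s v).
Proof.
rewrite /layer_sum [RHS]big_mkcond; apply: eq_bigr => s _ /=.
rewrite /layer_term [X in _ * X]big_pred0 ?mulr1; last by move=> v; rewrite /= ltnNge tdepth_le.
have edges : edges_upto d s = \prod_u \prod_(v | is_child u v) w (s u) (s v).
  by apply: eq_bigr => u _; apply: eq_bigl => v; rewrite tdepth_le andbT.
have leaves : \prod_(u | tdepth u == d) subtree_lik u (s u) = (leaves_are s x)%:R.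
  rewrite /leaves_are -(prodr_natb_forall _ (fun v => tdepth v == d)).
  by apply: eq_bigr => u /eqP du; rewrite /subtree_lik du subnn.
rewrite edges leaves root_isE.
by case: (s troot == b); case: (leaves_are s x) => /=; ring.
Qed.

Lemma subtree_lik_layer r (s : {ffun V -> bool}) : (r < d)%N ->
  \prod_(u | tdepth u == r) subtree_lik u (s u) =
  \prod_(v | tdepth v == r.+1)
     \sum_(c : bool) (\prod_(u | is_child u v) w (s u) c) * subtree_lik v c.
Proof.
move=> r_lt_d.
rewrite (eq_bigr (fun u => \prod_(v | is_child u v) \sum_c w (s u) c * subtree_lik v c));
  last by move=> u /eqP du; rewrite subtree_likE // du.
rewrite (exchange_big_dep (fun v => tdepth v == r.+1)) /=; last first.
  by move=> u v /eqP du /is_child_depth ->; rewrite du.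
apply: eq_bigr => v dv.
have [p cpv] : exists p, is_child p v by apply: (parent_exists k_gt0); rewrite (eqP dv).
have parentE u : is_child u v = (u == p).
  by apply/idP/eqP => [cuv|-> //]; apply: parent_unique cuv cpv.
rewrite (big_pred1 p) => [|u]; last first.
  rewrite /= parentE; case: (u =P p) => [->|_]; rewrite ?andbF // andbT.
  by move: dv; rewrite (is_child_depth cpv) eqSS.
by apply: eq_bigr => c _; rewrite (big_pred1 p).
Qed.

Section LayerStep.
Variables (r : nat) (b : bool).
Hypothesis r_lt_d : (r < d)%N.
Let D (v : V) := tdepth v == r.+1.

Let upper_weight (s : {ffun V -> bool}) : R :=
  (s troot == b)%:R * edges_upto r s * \prod_(v : V | (r.+1 < tdepth v)%N) (1 / 2).

Let layer_factor (s : {ffun V -> bool}) (v : V) (c : bool) : R :=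
  if D v then (\prod_(u | is_child u v) w (s u) c) * subtree_lik v c else 1.

Lemma edges_upto_merge s t :
  edges_upto r.+1 (merge_on D s t) =
  edges_upto r s * \prod_u \prod_(v | is_child u v && D v) w (s u) (t v).
Proof.
have parent_notD u v : is_child u v -> (tdepth v <= r.+1)%N -> D u = false.
  by move=> cuv; rewrite /D (is_child_depth cuv) => le; apply/negbTE; lia.
rewrite /edges_upto -big_split; apply: eq_bigr => u _ /=.
rewrite (bigID D) /= mulrC; congr (_ * _); apply: eq_big => v.
- by rewrite /D; case: (is_child u v) => //=; apply/idP/idP; lia.
- by case/andP => /andP[cuv le] nD; rewrite !ffunE (negbTE nD) (parent_notD _ _ cuv le).
- by rewrite /D; case: (is_child u v) => //=; apply/idP/idP; lia.
- by case/andP => /andP[cuv le] Dv; rewrite !ffunE Dv (parent_notD _ _ cuv le).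
Qed.

Lemma layer_term_merge s t :
  layer_term r.+1 b (merge_on D s t) = upper_weight s * \prod_v layer_factor s v (t v).
Proof.
have rootE : merge_on D s t troot = s troot by rewrite ffunE.
have layerE : \prod_(u | tdepth u == r.+1) subtree_lik u (merge_on D s t u) =
              \prod_(u | D u) subtree_lik u (t u).
  by apply: eq_bigr => u Du; rewrite ffunE (_ : D u).
have factorE : \prod_v layer_factor s v (t v) =
    (\prod_u \prod_(v | is_child u v && D v) w (s u) (t v)) *
    \prod_(v | D v) subtree_lik v (t v).
  rewrite /layer_factor -big_mkcond big_split /=; congr (_ * _).
  rewrite [RHS](exchange_big_dep D) /=; last by move=> u v _ /andP[].
  by apply: eq_bigr => v Dv; apply: eq_bigl => u; rewrite Dv andbT.
by rewrite /layer_term /upper_weight rootE edges_upto_merge layerE factorE; ring.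
Qed.

Lemma layer_term_sum_out s :
  layer_term r b s *+ #|{ffun V -> bool}| =
  upper_weight s * \prod_v \sum_c layer_factor s v c.
Proof.
have card2 : (#|{ffun V -> bool}|%:R : R) = (\prod_(v | D v) 2) * \prod_(v | ~~ D v) 2.
  transitivity (\prod_(v : V) (2 : R)); last by rewrite (bigID D).
  by rewrite prodr_const card_ffun card_bool natrX.
have halves : \prod_(v : V | (r < tdepth v)%N) (1 / 2 : R) =
    (\prod_(v | D v) (1 / 2)) * \prod_(v : V | (r.+1 < tdepth v)%N) (1 / 2).
  by rewrite [LHS](bigID D) /=; congr (_ * _); apply: eq_bigl => v; rewrite /D;
    apply/idP/idP; lia.
have factors : \prod_v \sum_c layer_factor s v c =
    (\prod_(v | D v) \sum_c (\prod_(u | is_child u v) w (s u) c) * subtree_lik v c) *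
    \prod_(v | ~~ D v) 2.
  rewrite (bigID D) /=; congr (_ * _); apply: eq_bigr => v Dv; rewrite /layer_factor.
    by apply: eq_bigr => c _; rewrite Dv.
  by rewrite (negbTE Dv) big_bool.
have cancel : (\prod_(v | D v) (2 : R)) * \prod_(v | D v) (1 / 2) = 1.
  by rewrite -big_split big1 // => v _ /=; lra.
have regroup (a e l h q p n : R) : a * e * l * (h * q) * (p * n) = p * h * (a * e * q * (l * n)).
  by ring.
rewrite -(mulr_natr (layer_term r b s)) card2 factors /layer_term /upper_weight halves.
by rewrite (subtree_lik_layer s r_lt_d) regroup cancel mul1r.
Qed.

Lemma layer_sum_succ : layer_sum r b = layer_sum r.+1 b.
Proof.
have N_gt0 : (0 < #|{ffun V -> bool}|)%N by rewrite card_ffun card_bool expn_gt0.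
apply/eqP; rewrite -(eqr_pMn2r N_gt0); apply/eqP.
rewrite /layer_sum -[in RHS](sum_merge_on D) -sumrMnl.
apply: eq_bigr => s _; rewrite layer_term_sum_out bigA_distr_bigA mulr_sumr.
by apply: eq_bigr => t _; rewrite layer_term_merge.
Qed.

End LayerStep.

Lemma layer_sum_const r b : (r <= d)%N -> layer_sum r b = layer_sum 0 b.
Proof.
elim: r => [//|r IH] r_lt_d.
by rewrite -layer_sum_succ // IH // ltnW.
Qed.

Lemma cond_root1_lik :
  cond_root1 theta x = lik d troot true / (lik d troot true + lik d troot false).
Proof.
have layer_lik c : layer_sum d c = lik d troot c.
  by rewrite layer_sum_const // layer_sum0 /subtree_lik subn0.
have joint : prob_root1_leaves theta x = 1 / 2 * layer_sum d true.
  by rewrite /prob_root1_leaves layer_sum_d mulr_sumr.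
have marginal : prob_leaves theta x = 1 / 2 * (layer_sum d true + layer_sum d false).
  rewrite /prob_leaves !layer_sum_d !(big_mkcond (fun s => root_is s _ && _)) /=.
  rewrite -big_split mulr_sumr big_mkcond; apply: eq_bigr => s _ /=.
  rewrite !root_isE /label_prob.
  by case: (leaves_are s x); case: (s troot) => /=; ring.
rewrite /cond_root1 joint marginal !layer_lik invfM mulrACA divff ?mul1r //; lra.
Qed.

End Posterior.

(** * Random partial functions *)

Definition agree (a b : option bool) : option bool :=
  if (a, b) is (Some x, Some y) then (if x == y then a else None) else None.

Definition orelse (a b : option bool) : option bool := if a is Some _ then a else b.

Section RandomFunctions.
Variables (R : realType) (X : finType).
Local Notation Fn := {ffun X -> option bool}.
Local Notation Dist := {ffun Fn -> R}.

Definition marg (P : Dist) (y : X) (a : option bool) : R := \sum_(F : Fn | F y == a) P F.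

Definition answer_prob (P : Dist) (y : X) : R := marg P y (Some true) + marg P y (Some false).

Definition dirac (f : Fn) : Dist := [ffun F => (F == f)%:R].

Definition lift2 (op : option bool -> option bool -> option bool) (F G : Fn) : Fn :=
  [ffun y => op (F y) (G y)].

Definition combine op (P Q : Dist) : Dist :=
  [ffun H => \sum_(F : Fn) \sum_(G : Fn) (H == lift2 op F G)%:R * (P F * Q G)].

Definition negF (F : Fn) : Fn := [ffun y => omap negb (F y)].

Lemma distr_ge0 (P : Dist) F : is_distr P -> 0 <= P F.
Proof. by case. Qed.

Lemma marg_ge0 (P : Dist) y a : is_distr P -> 0 <= marg P y a.
Proof. by move=> hP; apply: sumr_ge0 => F _; apply: distr_ge0. Qed.

Lemma sum_marg (P : Dist) y (phi : option bool -> R) :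
  \sum_(F : Fn) P F * phi (F y) = \sum_(a : option bool) phi a * marg P y a.
Proof.
rewrite (partition_big (fun F : Fn => F y) xpredT) //=.
apply: eq_bigr => a _; rewrite /marg mulr_sumr.
by apply: eq_bigr => F /eqP ->; rewrite mulrC.
Qed.

Lemma marg_total (P : Dist) y : is_distr P ->
  marg P y None + marg P y (Some true) + marg P y (Some false) = 1.
Proof.
case=> _ <-; rewrite -sum_option_bool.
rewrite -(eq_bigr _ (fun F _ => mulr1 (P F))) (sum_marg P y (fun _ => 1)).
by apply: eq_bigr => a _; rewrite mul1r.
Qed.

Lemma answer_prob_le1 (P : Dist) y : is_distr P -> answer_prob P y <= 1.
Proof.
move=> hP; have := marg_total y hP; have := marg_ge0 y None hP.
by rewrite /answer_prob; lra.
Qed.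

Lemma sum_defined (P : Dist) y : \sum_(F : Fn | F y != None) P F = answer_prob P y.
Proof.
rewrite big_mkcond /= (eq_bigr (fun F => P F * (F y != None)%:R)) => [|F _]; last first.
  by case: (F y != None); rewrite ?mulr1 ?mulr0.
by rewrite (sum_marg P y (fun a => (a != None)%:R)) sum_option_bool /answer_prob /=; ring.
Qed.

Lemma sum_indicator (z : Fn) (A : pred Fn) (c : R) :
  \sum_(H : Fn | A H) (H == z)%:R * c = (A z)%:R * c.
Proof.
case Az: (A z).
  by rewrite (bigD1 z) //= eqxx big1 ?addr0 // => H /andP[_ /negbTE ->]; rewrite mul0r.
by rewrite big1 ?mul0r // => H; case: eqP => [->|]; rewrite ?Az ?mul0r.
Qed.

Lemma dirac_distr f : is_distr (dirac f).
Proof.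
split=> [F|]; first by rewrite ffunE ler0n.
by rewrite (bigD1 f) //= ffunE eqxx big1 ?addr0 // => F /negbTE; rewrite ffunE => ->.
Qed.

Lemma dirac_marg f y a : marg (dirac f) y a = (f y == a)%:R.
Proof.
rewrite /marg (eq_bigr (fun F => (F == f)%:R * 1)) => [|F _]; last by rewrite ffunE mulr1.
by rewrite sum_indicator mulr1.
Qed.

Lemma combine_distr op (P Q : Dist) :
  is_distr P -> is_distr Q -> is_distr (combine op P Q).
Proof.
move=> [P_ge0 P_sum] [Q_ge0 Q_sum]; split=> [H|].
  rewrite ffunE; apply: sumr_ge0 => F _; apply: sumr_ge0 => G _.
  by rewrite mulr_ge0 ?ler0n ?mulr_ge0.
under eq_bigr do rewrite ffunE.
rewrite exchange_big /=; under eq_bigr do rewrite exchange_big /=.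
under eq_bigr do under eq_bigr do rewrite (sum_indicator _ xpredT) /= mul1r.
under eq_bigr do rewrite -mulr_sumr Q_sum mulr1.
exact: P_sum.
Qed.

Lemma combine_marg op (P Q : Dist) y c : marg (combine op P Q) y c =
  \sum_(a : option bool) \sum_(b : option bool) (op a b == c)%:R * (marg P y a * marg Q y b).
Proof.
rewrite {1}/marg; under eq_bigr do rewrite ffunE.
rewrite exchange_big /=; under eq_bigr do rewrite exchange_big /=.
under eq_bigr do under eq_bigr do rewrite (sum_indicator _ (fun H : Fn => H y == c)) /= ffunE.
transitivity (\sum_(F : Fn) P F * \sum_(b : option bool) (op (F y) b == c)%:R * marg Q y b).
  apply: eq_bigr => F _; rewrite -(sum_marg Q y (fun b => (op (F y) b == c)%:R)) mulr_sumr.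
  by apply: eq_bigr => G _; ring.
rewrite (sum_marg P y (fun a => \sum_b (op a b == c)%:R * marg Q y b)).
by apply: eq_bigr => a _; rewrite mulr_suml; apply: eq_bigr => b _; ring.
Qed.

Lemma combine_supp op (P Q : Dist) H : is_distr P -> is_distr Q ->
  0 < combine op P Q H -> exists F G, [/\ 0 < P F, 0 < Q G & H = lift2 op F G].
Proof.
move=> hP hQ; rewrite ffunE => /lt0r_neq0/eqP.
have term_ge0 F G : 0 <= (H == lift2 op F G)%:R * (P F * Q G).
  by rewrite mulr_ge0 ?ler0n ?mulr_ge0 ?distr_ge0.
move/(psumr_neq0P (fun F _ => sumr_ge0 _ (fun G _ => term_ge0 F G))) => [F].
move=> /andP[_ /lt0r_neq0/eqP /(psumr_neq0P (fun G _ => term_ge0 F G))[G /andP[_]]].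
have [-> | _] := eqVneq H (lift2 op F G); last by rewrite mul0r ltxx.
rewrite mul1r => /lt0r_neq0; rewrite mulf_eq0 negb_or => /andP[PF QG].
by exists F, G; rewrite !lt0r PF QG !distr_ge0.
Qed.

Lemma negFK : involutive negF.
Proof. by move=> F; apply/ffunP => y; rewrite !ffunE; case: (F y) => [[]|]. Qed.

Lemma sum_negF (P : Dist) (A : pred Fn) :
  \sum_(H : Fn | A H) P (negF H) = \sum_(H : Fn | A (negF H)) P H.
Proof.
rewrite (reindex_inj (inv_inj negFK)) /=.
by apply: eq_bigr => H _; rewrite negFK.
Qed.

Section Noise.
Variable theta : R.

(* A single coin decides whether the whole function is negated; only the
   marginals at each input matter below. *)
Definition noise (P : Dist) : Dist :=
  [ffun H => (1 + theta) / 2 * P H + (1 - theta) / 2 * P (negF H)].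

Lemma noise_distr (P : Dist) : -1 <= theta <= 1 -> is_distr P -> is_distr (noise P).
Proof.
move=> /andP[theta_ge theta_le] [P_ge0 P_sum]; split=> [H|].
  by rewrite ffunE addr_ge0 // mulr_ge0 //; lra.
under eq_bigr do rewrite ffunE.
by rewrite big_split /= -!mulr_sumr (sum_negF P xpredT) P_sum; lra.
Qed.

Lemma noise_marg (P : Dist) y a : marg (noise P) y a =
  (1 + theta) / 2 * marg P y a + (1 - theta) / 2 * marg P y (omap negb a).
Proof.
rewrite /marg; under eq_bigr do rewrite ffunE.
rewrite big_split /= -!mulr_sumr sum_negF; congr (_ + _ * _).
by apply: eq_bigl => H; rewrite ffunE; case: (H y) a => [[]|] [[]|].
Qed.

Lemma noise_margE (P : Dist) y b :
  marg (noise P) y (Some b) = \sum_(c : bool) edge_w theta b c * marg P y (Some c).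
Proof. by rewrite noise_marg big_bool /edge_w; case: b => /=; ring. Qed.

Lemma noise_supp (P : Dist) H : is_distr P ->
  0 < noise P H -> 0 < P H \/ 0 < P (negF H).
Proof.
move=> hP; rewrite ffunE.
have [PH|PH] := ltrP 0 (P H); first by left.
have [PnH|PnH] := ltrP 0 (P (negF H)); first by right.
have -> : P H = 0 by apply/le_anti; rewrite PH distr_ge0.
have -> : P (negF H) = 0 by apply/le_anti; rewrite PnH distr_ge0.
by rewrite !mulr0 addr0 ltxx.
Qed.

Definition flip_min : R := (1 - theta) * (1 + theta) / 4.

Lemma flip_min_bounds : -1 <= theta <= 1 -> 0 <= flip_min <= 1 / 4.
Proof. by move=> /andP[theta_ge theta_le]; rewrite /flip_min; apply/andP; split; nra. Qed.

Lemma noise_true_ge (P : Dist) y : is_distr P ->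
  flip_min * answer_prob P y <= marg (noise P) y (Some true).
Proof.
move=> hP; rewrite noise_marg /answer_prob /flip_min /=.
have slack : 0 <= (1 + theta) ^+ 2 * marg P y (Some true) + (1 - theta) ^+ 2 * marg P y (Some false).
  by rewrite addr_ge0 // mulr_ge0 ?sqr_ge0 ?marg_ge0.
nra.
Qed.

End Noise.

End RandomFunctions.

Lemma sum_agree (R : comPzRingType) (f g : option bool -> R) b :
  \sum_(a : option bool) \sum_(c : option bool) (agree a c == Some b)%:R * (f a * g c) =
  f (Some b) * g (Some b).
Proof. by rewrite !sum_option_bool; case: b => /=; ring. Qed.

Lemma sum_orelse (R : comPzRingType) (f g : option bool -> R) b :
  \sum_(a : option bool) \sum_(c : option bool) (orelse a c == Some b)%:R * (f a * g c) =
  f (Some b) * (g None + g (Some true) + g (Some false)) + f None * g (Some b).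
Proof. by rewrite !sum_option_bool; case: b => /=; ring. Qed.

Definition propto (R : pzRingType) (I : Type) (f g : I -> R) : Prop :=
  exists c, forall i, f i = c * g i.

Lemma big_propto (R : comPzRingType) (J : eqType) (I : Type) (r : seq J) (f g : J -> I -> R) :
  (forall j, j \in r -> propto (f j) (g j)) ->
  propto (fun i => \prod_(j <- r) f j i) (fun i => \prod_(j <- r) g j i).
Proof.
elim: r => [|j r IH] fg; first by exists 1 => i; rewrite !big_nil mul1r.
have [c1 e1] := fg j (mem_head _ _).
have [c2 e2] := IH (fun j' r_j' => fg j' (@mem_behead _ (j :: r) j' r_j')).
by exists (c1 * c2) => i; rewrite !big_cons e1 e2; ring.
Qed.

Lemma propto_ratio (R : fieldType) (f g : bool -> R) : propto f g ->
  f true + f false != 0 -> f true / (f true + f false) = g true / (g true + g false).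
Proof.
move=> [c fE]; rewrite !fE -mulrDr => nz.
have c_neq0 : c != 0 by apply: contraNneq nz => ->; rewrite mul0r.
by rewrite invfM mulrACA divff // mul1r.
Qed.

Lemma exprn_le_prod (R : numDomainType) (I : eqType) (r : seq I) (f : I -> R) c :
  0 <= c -> (forall i, i \in r -> c <= f i) -> c ^+ size r <= \prod_(i <- r) f i.
Proof.
move=> c_ge0; elim: r => [|i r IH] cf; first by rewrite big_nil expr0.
rewrite big_cons exprS ler_pM ?exprn_ge0 ?cf ?mem_head //.
by apply: IH => j r_j; apply: cf; rewrite inE r_j orbT.
Qed.

Section Combinators.
Variables (R : realType) (X : finType) (theta : R).
Local Notation Fn := {ffun X -> option bool}.
Local Notation Dist := {ffun Fn -> R}.

Definition noisy_agree (P : Dist) (l : seq Dist) : Dist :=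
  foldr (fun Q acc => combine agree (noise theta Q) acc) (noise theta P) l.

Fixpoint retry (m : nat) (G : Dist) : Dist :=
  if m is m'.+1 then combine orelse G (retry m' G) else G.

Lemma noisy_agree_distr (P : Dist) l : -1 <= theta <= 1 ->
  is_distr P -> {in l, forall Q, is_distr Q} -> is_distr (noisy_agree P l).
Proof.
move=> theta_bd hP; elim: l => [|Q l IH] hl /=; first exact: noise_distr.
apply: combine_distr; first by apply: noise_distr => //; apply: hl; apply: mem_head.
by apply: IH => Q' l_Q'; apply: hl; rewrite inE l_Q' orbT.
Qed.

Lemma noisy_agree_marg (P : Dist) l y b :
  marg (noisy_agree P l) y (Some b) = \prod_(Q <- P :: l) marg (noise theta Q) y (Some b).
Proof.
rewrite big_cons; elim: l => [|Q l IH] /=; first by rewrite big_nil mulr1.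
by rewrite combine_marg sum_agree IH big_cons; ring.
Qed.

Lemma noisy_agree_true_ge (P : Dist) l y s : -1 <= theta <= 1 -> 0 <= s ->
  is_distr P -> s <= answer_prob P y ->
  {in l, forall Q, is_distr Q /\ s <= answer_prob Q y} ->
  (flip_min theta * s) ^+ (size l).+1 <= marg (noisy_agree P l) y (Some true).
Proof.
move=> /flip_min_bounds/andP[flip_min_ge0 _] s_ge0 hP sP hl.
rewrite noisy_agree_marg -[(size l).+1]/(size (P :: l)).
apply: exprn_le_prod => [|Q]; first exact: mulr_ge0.
have noisy_ge (Q' : Dist) : is_distr Q' -> s <= answer_prob Q' y ->
    flip_min theta * s <= marg (noise theta Q') y (Some true).
  by move=> hQ' sQ'; apply: le_trans (ler_wpM2l flip_min_ge0 sQ') (noise_true_ge theta y hQ').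
by rewrite inE => /predU1P[-> | /hl[hQ sQ]]; apply: noisy_ge.
Qed.

Lemma retry_distr m (G : Dist) : is_distr G -> is_distr (retry m G).
Proof. by move=> hG; elim: m => [|m IH] //=; apply: combine_distr. Qed.

Lemma retry_margE m (G : Dist) y b : is_distr G ->
  marg (retry m.+1 G) y (Some b) =
  marg G y (Some b) + (1 - answer_prob G y) * marg (retry m G) y (Some b).
Proof.
move=> hG; rewrite /= combine_marg sum_orelse (marg_total y (retry_distr m hG)).
have := marg_total y hG; rewrite /answer_prob => total.
have -> : marg G y None = 1 - (marg G y (Some true) + marg G y (Some false)) by lra.
by ring.
Qed.

Lemma retry_propto m (G : Dist) y (L : bool -> R) : is_distr G ->
  propto (fun b => marg G y (Some b)) L -> propto (fun b => marg (retry m G) y (Some b)) L.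
Proof.
move=> hG [c GL]; elim: m => [|m [c' IH]]; first by exists c.
exists (c + (1 - answer_prob G y) * c') => b.
by rewrite retry_margE // IH GL; ring.
Qed.

Lemma retry_answer m (G : Dist) y : is_distr G ->
  1 - answer_prob (retry m G) y = (1 - answer_prob G y) ^+ m.+1.
Proof.
move=> hG; elim: m => [|m IH]; first by rewrite expr1.
by rewrite exprS -IH {1}/answer_prob !retry_margE // /answer_prob; ring.
Qed.

End Combinators.

(** * Circuit depth *)

Section CircuitDepth.
Variables (R : realType) (n : nat).
Local Notation X := {ffun 'I_n -> bool}.
Local Notation Fn := {ffun X -> option bool}.
Local Notation Dist := {ffun Fn -> R}.

Definition depth_bounded (P : Dist) (D : nat) : Prop :=
  forall F, 0 < P F -> computable_depth F D.

Lemma computable_depth_mono (F : Fn) D D' :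
  (D <= D')%N -> computable_depth F D -> computable_depth F D'.
Proof.
move=> le [c1 [c2 [d1 d2 eF]]]; exists c1, c2.
by split=> //; apply: leq_trans le.
Qed.

Lemma computable_depth_negF (F : Fn) D :
  computable_depth F D -> computable_depth (negF F) D.+1.
Proof.
move=> [c1 [c2 [d1 d2 eF]]]; exists (CNot c1), (CNot c2); split=> // y.
by rewrite ffunE eF /decode3 /=; case: (ceval c1 y); case: (ceval c2 y).
Qed.

Lemma computable_depth_agree (F G : Fn) D :
  computable_depth F D -> computable_depth G D ->
  computable_depth (lift2 agree F G) (D + 2).
Proof.
move=> [c1 [c2 [d1 d2 eF]]] [c3 [c4 [d3 d4 eG]]].
exists (CAnd (CAnd c1 c2) (CAnd c3 c4)), (COr (COr c1 c2) (COr c3 c4)).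
split=> /= [||y]; try lia.
rewrite ffunE eF eG /decode3 /=.
by case: (ceval c1 y); case: (ceval c2 y); case: (ceval c3 y); case: (ceval c4 y).
Qed.

Lemma computable_depth_orelse (F G : Fn) D :
  computable_depth F D -> computable_depth G D ->
  computable_depth (lift2 orelse F G) (D + 5).
Proof.
move=> [c1 [c2 [d1 d2 eF]]] [c3 [c4 [d3 d4 eG]]].
pose undef := CAnd (COr c1 c2) (CNot (CAnd c1 c2)).
exists (COr (CAnd c1 c2) (CAnd undef c3)), (COr (CAnd c1 c2) (CAnd undef c4)).
split=> /= [||y]; try lia.
rewrite ffunE eF eG /decode3 /=.
by case: (ceval c1 y); case: (ceval c2 y); case: (ceval c3 y); case: (ceval c4 y).
Qed.

Lemma depth_bounded_mono (P : Dist) D D' :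
  depth_bounded P D -> (D <= D')%N -> depth_bounded P D'.
Proof. by move=> hP le F /hP; apply: computable_depth_mono. Qed.

Lemma dirac_depth (f : Fn) D : computable_depth f D -> depth_bounded (dirac R f) D.
Proof. by move=> hf F; rewrite ffunE; case: eqP => [-> //|]; rewrite ltxx. Qed.

Lemma noise_depth theta (P : Dist) D : is_distr P ->
  depth_bounded P D -> depth_bounded (noise theta P) D.+1.
Proof.
move=> hP bP H /(noise_supp hP)[/bP|/bP]; first exact: computable_depth_mono.
by rewrite -{2}[H]negFK; apply: computable_depth_negF.
Qed.

Lemma combine_depth op c (P Q : Dist) D :
  (forall F G : Fn, computable_depth F D -> computable_depth G D ->
     computable_depth (lift2 op F G) (D + c)) ->
  is_distr P -> is_distr Q -> depth_bounded P D -> depth_bounded Q D ->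
  depth_bounded (combine op P Q) (D + c).
Proof.
move=> op_depth hP hQ bP bQ H /(combine_supp hP hQ)[F [G [PF QG ->]]].
exact: op_depth (bP _ PF) (bQ _ QG).
Qed.

End CircuitDepth.

Section CombinatorDepth.
Variables (R : realType) (n : nat).
Local Notation Fn := {ffun {ffun 'I_n -> bool} -> option bool}.
Local Notation Dist := {ffun Fn -> R}.

Lemma noisy_agree_depth (theta : R) (P : Dist) l D : -1 <= theta <= 1 ->
  is_distr P -> depth_bounded P D ->
  {in l, forall Q, is_distr Q /\ depth_bounded Q D} ->
  depth_bounded (noisy_agree theta P l) (D + 2 * size l + 1).
Proof.
move=> theta_bd hP bP; elim: l => [|Q l IH] hl /=.
  by rewrite muln0 addn0 addn1; apply: noise_depth.
have [hQ bQ] := hl Q (mem_head _ _).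
have hl' : {in l, forall Q', is_distr Q' /\ depth_bounded Q' D}.
  by move=> Q' l_Q'; apply: hl; rewrite inE l_Q' orbT.
apply: (@depth_bounded_mono _ _ _ (D + 2 * size l + 1 + 2)); last by set z := size l; lia.
refine (combine_depth (fun F G => @computable_depth_agree _ F G _) _ _ _ (IH hl')).
- exact: noise_distr.
- by apply: noisy_agree_distr => // Q' /hl'[].
- by refine (depth_bounded_mono (noise_depth hQ bQ) _); lia.
Qed.

Lemma retry_depth m (G : Dist) D : is_distr G -> depth_bounded G D ->
  depth_bounded (retry m G) (D + 5 * m).
Proof.
move=> hG bG; elim: m => [|m IH] /=; first by rewrite muln0 addn0.
apply: (@depth_bounded_mono _ _ _ (D + 5 * m + 5)); last lia.
refine (combine_depth (fun F G => @computable_depth_orelse _ F G _) hG _ _ IH).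
- exact: retry_distr.
- by refine (depth_bounded_mono bG _); lia.
Qed.

End CombinatorDepth.

(** * The sampler *)

Lemma bernoulli_ineq (R : realFieldType) (q : R) (N : nat) : 0 <= q <= 1 ->
  (1 + N%:R * q) * (1 - q) ^+ N <= 1.
Proof.
move=> /andP[q_ge0 q_le1]; elim: N => [|N IH]; first by rewrite expr0 mul0r addr0 mulr1.
have pow_ge0 : 0 <= (1 - q) ^+ N by apply: exprn_ge0; lra.
have step : (1 + N.+1%:R * q) * (1 - q) <= 1 + N%:R * q.
  by rewrite -addn1 natrD; have := ler0n R N; nra.
by rewrite exprS mulrA (le_trans _ IH) // ler_wpM2r.
Qed.

Lemma exists_pow_le (R : archiFieldType) (q e : R) : 0 < q <= 1 -> 0 < e ->
  exists m, (1 - q) ^+ m.+1 <= e.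
Proof.
move=> /andP[q_gt0 q_le1] e_gt0.
pose M := Num.Def.archi_bound (1 / (e * q)); exists M.
have eq_gt0 : 0 < e * q by rewrite mulr_gt0.
have M_big : 1 < M%:R * (e * q).
  by rewrite -ltr_pdivrMr // archi_boundP // divr_ge0 // ltW.
have q_bd : 0 <= q <= 1 by rewrite (ltW q_gt0) q_le1.
have := bernoulli_ineq M.+1 q_bd; rewrite -addn1 natrD.
have : 0 <= (1 - q) ^+ M.+1 by apply: exprn_ge0; lra.
have := ler0n R M; move: M_big; set t := _ ^+ _; set a := M%:R; nra.
Qed.

Section Sampler.
Variables (R : realType) (theta : R) (k m d : nat).
Hypotheses (theta_bd : -1 <= theta <= 1) (k_gt0 : (0 < k)%N).
Local Notation V := (tvert k d).
Local Notation Fn := {ffun {ffun 'I_(k ^ d) -> bool} -> option bool}.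
Local Notation Dist := {ffun Fn -> R}.

Definition leaf_fun (v : V) : Fn := [ffun y : {ffun 'I_(k ^ d) -> bool} => Some (y (val v).2)].

Definition children (v : V) : seq V := enum [pred u | is_child v u].

Fixpoint sampler (j : nat) (v : V) : Dist :=
  if j is j'.+1 then
    if children v is u :: us then
      retry m (noisy_agree theta (sampler j' u) [seq sampler j' u' | u' <- us])
    else dirac R (leaf_fun v)
  else dirac R (leaf_fun v).

Definition level_depth : nat := 2 * k + 5 * m + 1.

Definition target : R := 1 - 1 / (2 * k%:R).

Definition agree_min : R := (flip_min theta * target) ^+ k.

Lemma mem_children (u v : V) : (u \in children v) = is_child v u.
Proof. by rewrite mem_enum. Qed.

Lemma size_children (v : V) : (size (children v) <= k)%N.
Proof. by rewrite -cardE card_children_le. Qed.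

Lemma prod_children (v : V) (F : V -> R) :
  \prod_(u <- children v) F u = \prod_(u | is_child v u) F u.
Proof. by rewrite big_enum; apply: eq_bigl => u; rewrite inE. Qed.

Lemma leaf_fun_depth (v : V) D : computable_depth (leaf_fun v) D.
Proof.
by exists (CInp (val v).2), (CInp (val v).2); split=> // y; rewrite ffunE /decode3 eqxx.
Qed.

Lemma target_bounds : 1 / 2 <= target <= 1.
Proof.
have k_ge1 : 1 <= k%:R :> R by rewrite ler1n.
have inv_le : 1 / (2 * k%:R) <= 1 / 2 :> R.
  by rewrite ler_pdivrMr ?mulr_gt0 ?ltr0n //; lra.
have inv_ge0 : 0 <= 1 / (2 * k%:R) :> R by rewrite divr_ge0 // mulr_ge0 //; lra.
by rewrite /target; apply/andP; split; lra.
Qed.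

Lemma agree_min_bounds : -1 < theta < 1 -> 0 < agree_min <= 1.
Proof.
move=> /andP[theta_gt theta_lt]; have /andP[target_ge target_le] := target_bounds.
have fm_gt0 : 0 < flip_min theta by rewrite /flip_min; nra.
have fm_le : flip_min theta <= 1 / 4 by rewrite /flip_min; nra.
have base_gt0 : 0 < flip_min theta * target by apply: mulr_gt0; lra.
have base_le1 : flip_min theta * target <= 1 by nra.
by rewrite /agree_min exprn_gt0 // exprn_ile1 // ltW.
Qed.

Lemma sampler_distr j v : is_distr (sampler j v).
Proof.
elim: j v => [|j IH] v /=; first exact: dirac_distr.
case: (children v) => [|u us]; first exact: dirac_distr.
by apply: retry_distr; apply: noisy_agree_distr => // _ /mapP[u' _ ->].
Qed.

Lemma sampler_depth j v : depth_bounded (sampler j v) (level_depth * j).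
Proof.
elim: j v => [|j IH] v /=; first exact/dirac_depth/leaf_fun_depth.
have := size_children v; case: (children v) => [|u us] size_le.
  exact/dirac_depth/leaf_fun_depth.
have hmap : {in [seq sampler j u' | u' <- us],
    forall Q, is_distr Q /\ depth_bounded Q (level_depth * j)}.
  by move=> _ /mapP[u' _ ->]; split; [apply: sampler_distr | apply: IH].
have hG := noisy_agree_distr theta_bd (sampler_distr j u) (fun Q hQ => (hmap Q hQ).1).
have bG := noisy_agree_depth theta_bd (sampler_distr j u) (IH u) hmap.
refine (depth_bounded_mono (retry_depth (m := m) hG bG) _).
rewrite size_map mulnS; move: size_le => /=; rewrite /level_depth.
by set z := size us; set lj := (_ * j)%N; lia.
Qed.

Lemma sampler_propto j v y : (tdepth v + j = d)%N ->
  propto (fun b => marg (sampler j v) y (Some b)) (lik theta y j v).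
Proof.
elim: j v => [|j IH] v dv /=.
  by exists 1 => b; rewrite dirac_marg mul1r ffunE eq_sym.
have [u0 child_u0] : exists u, is_child v u by apply: (child_exists k_gt0); lia.
case E: (children v) => [|u us]; first by move: child_u0; rewrite -mem_children E.
apply: retry_propto.
  by apply: noisy_agree_distr => // [|_ /mapP[u' _ ->]]; apply: sampler_distr.
have [c noisy_propto] : propto
    (fun b => \prod_(w <- u :: us) marg (noise theta (sampler j w)) y (Some b))
    (fun b => \prod_(w <- u :: us) \sum_(c : bool) edge_w theta b c * lik theta y j w c).
  apply: big_propto => w; rewrite -E mem_children => child_w.
  have dw : (tdepth w + j = d)%N by rewrite (is_child_depth child_w); lia.
  have [c child_propto] := IH w dw.
  exists c => b; rewrite noise_margE mulr_sumr.
  by apply: eq_bigr => c' _; rewrite child_propto; ring.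
exists c => b; rewrite noisy_agree_marg.
by rewrite -[_ :: _]/(map (sampler j) (u :: us)) big_map noisy_propto -E prod_children.
Qed.

Hypothesis retry_enough : (1 - agree_min) ^+ m.+1 <= 1 / (2 * k%:R).

Lemma sampler_answer j v y : target <= answer_prob (sampler j v) y.
Proof.
have /andP[target_ge target_le] := target_bounds.
have leaf_answer w : target <= answer_prob (dirac R (leaf_fun w)) y.
  by rewrite /answer_prob !dirac_marg ffunE; case: (y _) => /=; lra.
elim: j v => [|j IH] v /=; first exact: leaf_answer.
have := size_children v; case: (children v) => [|u us] size_le; first exact: leaf_answer.
have hmap : {in [seq sampler j u' | u' <- us],
    forall Q, is_distr Q /\ target <= answer_prob Q y}.
  by move=> _ /mapP[u' _ ->]; split; [apply: sampler_distr | apply: IH].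
set G := noisy_agree theta _ _.
have hG : is_distr G.
  by apply: noisy_agree_distr (sampler_distr j u) (fun Q hQ => (hmap Q hQ).1).
have G_answer : agree_min <= answer_prob G y.
  have /andP[fm_ge0 fm_le] := flip_min_bounds theta_bd.
  apply: (@le_trans _ _ (marg G y (Some true))); last first.
    by rewrite /answer_prob lerDl marg_ge0.
  have target_ge0 : 0 <= target by lra.
  apply: le_trans (noisy_agree_true_ge theta_bd target_ge0 (sampler_distr j u) (IH u) hmap).
  by rewrite /agree_min ler_wiXn2l ?(mulr_ge0 fm_ge0 target_ge0) ?size_map //; nra.
have G_answer_le1 := answer_prob_le1 y hG.
have pow_le : (1 - answer_prob G y) ^+ m.+1 <= (1 - agree_min) ^+ m.+1.
  by apply: lerXn2r; rewrite ?nnegrE; lra.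
have : 1 - answer_prob (retry m G) y <= 1 / (2 * k%:R).
  by rewrite retry_answer //; apply: le_trans pow_le retry_enough.
by rewrite /target; lra.
Qed.

End Sampler.

Unset Implicit Arguments.
Set Strict Implicit.

Theorem mainTheorem19 (R : realType) (theta : R) (k : nat) :
  -1 < theta < 1 -> (0 < k)%N ->
  exists h : R, 0 < h /\
  forall d : nat,
  exists PF : {ffun {ffun {ffun 'I_(k ^ d) -> bool} -> option bool} -> R},
    [/\ is_distr PF,
        (forall F, 0 < PF F -> exists D : nat,
             (D%:R <= h * d%:R) /\ computable_depth F D),
        (forall x : {ffun 'I_(k ^ d) -> bool},
           \sum_(F : {ffun {ffun 'I_(k ^ d) -> bool} -> option bool} | F x != None) PF F >= 1 - 1 / (2 * k%:R)) &
        (forall x : {ffun 'I_(k ^ d) -> bool},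
           (\sum_(F : {ffun {ffun 'I_(k ^ d) -> bool} -> option bool} | F x == Some true) PF F) / (\sum_(F : {ffun {ffun 'I_(k ^ d) -> bool} -> option bool} | F x != None) PF F)
           = cond_root1 theta x)].
Proof.
move=> theta_bd k_gt0.
have theta_bd' : -1 <= theta <= 1 by case/andP: theta_bd => ? ?; rewrite !ltW.
have inv_gt0 : 0 < 1 / (2 * k%:R) :> R by rewrite divr_gt0 ?mulr_gt0 ?ltr0n.
have [m retry_enough] := exists_pow_le (agree_min_bounds k_gt0 theta_bd) inv_gt0.
exists (level_depth k m)%:R; split=> [|d]; first by rewrite ltr0n /level_depth addn1.
pose root := @troot k d k_gt0.
exists (sampler theta m d root); split=> [||x|x].
- exact: sampler_distr.
- move=> F PF; exists (level_depth k m * d)%N; rewrite natrM; split=> //.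
  exact: (sampler_depth theta_bd' k_gt0 PF).
- by rewrite sum_defined; apply: (sampler_answer theta_bd' k_gt0 retry_enough).
have answer_gt0 : 0 < answer_prob (sampler theta m d root) x.
  apply: lt_le_trans (sampler_answer theta_bd' k_gt0 retry_enough d root x).
  by case/andP: (target_bounds R k_gt0) => half_le _; lra.
rewrite sum_defined (cond_root1_lik theta k_gt0).
apply: (propto_ratio (f := fun b => marg (sampler theta m d root) x (Some b))).
  exact: (sampler_propto m theta_bd' k_gt0).
exact: lt0r_neq0.
Qed.
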